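(* Let $\Theta\subseteq\mathbb{R}^d$ be closed and convex. Suppose the loss $\ell$ is $\gamma$-strongly convex in $\theta$ and $\beta$-smooth in $z$, that the distribution map $\mathcal{D}(\cdot)$ is $\epsilon$-sensitive, that $\ell(z;\theta)$ is convex in $z$ for every $\theta$, and that $\mathcal{D}(\alpha\theta+(1-\alpha)\theta')\leq_{cx}\alpha\mathcal{D}(\theta)+(1-\alpha)\mathcal{D}(\theta')$ for all $\theta,\theta'\in\Theta$ and $\alpha\in(0,1)$. Then the performative risk $\mathrm{PR}(\theta)$ is $(\gamma-2\epsilon\beta)$-convex.
   Context: A distribution map assigns to each $\theta\in\Theta$ a distribution $\mathcal{D}(\theta)$ over $\mathbb{R}^m$; $\mathrm{PR}(\theta)=\mathbb{E}_{z\sim\mathcal{D}(\theta)}\ell(z;\theta)$; $\mathrm{PR}$ is $\lambda$-convex if $\mathrm{PR}(\theta)-\frac{\lambda}{2}\|\theta\|_2^2$ is convex. For distributions $\mathcal{D}_1,\mathcal{D}_2$ on $\mathbb{R}^m$, $\mathcal{D}_1\leq_{cx}\mathcal{D}_2$ means $\mathbb{E}_{z\sim\mathcal{D}_1}g(z)\leq\mathbb{E}_{z\sim\mathcal{D}_2}g(z)$ for all convex $g:\mathbb{R}^m\to\mathbb{R}$; $\alpha\mathcal{D}(\theta)+(1-\alpha)\mathcal{D}(\theta')$ is the mixture. Let $\mathcal{Z}=\bigcup_{\theta\in\Theta}\mathrm{supp}(\mathcal{D}(\theta))$. ($\epsilon$-sensitive) $W_1(\mathcal{D}(\theta),\mathcal{D}(\theta'))\leq\epsilon\|\theta-\theta'\|_2$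 for all $\theta,\theta'\in\Theta$; ($\beta$-smooth in $z$) $\|\nabla_\theta\ell(z;\theta)-\nabla_\theta\ell(z';\theta)\|_2\leq\beta\|z-z'\|_2$ for all $\theta\in\Theta$, $z,z'\in\mathcal{Z}$; ($\gamma$-strongly convex in $\theta$) for all $\theta,\theta',\theta_0\in\Theta$, $\mathbb{E}_{z\sim\mathcal{D}(\theta_0)}\ell(z;\theta)\geq \mathbb{E}_{z\sim\mathcal{D}(\theta_0)}\ell(z;\theta')+\mathbb{E}_{z\sim\mathcal{D}(\theta_0)}\nabla_\theta\ell(z;\theta')^\top(\theta-\theta')+\frac{\gamma}{2}\|\theta-\theta'\|_2^2$. *)

From HB Require Import structures.
From mathcomp Require Import all_boot all_order all_algebra.
From mathcomp Require Import all_classical all_reals all_analysis.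

Set Implicit Arguments.
Unset Strict Implicit.
Unset Printing Implicit Defensive.

Import Order.TTheory GRing.Theory Num.Theory.
Import numFieldNormedType.Exports.

Local Open Scope classical_set_scope.
Local Open Scope ring_scope.

(** It is equipped
    with its Borel sigma-algebra (sigma-algebra generated by its open sets;
    the matrix topology is the usual Euclidean topology of R^m). *)
HB.instance Definition _ (R : realType) (m : nat) :=
  Measurable.copy 'rV[R]_m (g_sigma_algebraType (@open 'rV[R]_m)).

Definition dotv (R : realType) (n : nat) (u v : 'rV[R]_n) : R :=
  \sum_(i < n) u ord0 i * v ord0 i.

Definition norm2 (R : realType) (n : nat) (u : 'rV[R]_n) : R :=
  Num.sqrt (dotv u u).

Definition convex_setv (R : realType) (n : nat) (A : set 'rV[R]_n) : Prop :=
  forall x y (a : R), A x -> A y -> 0 <= a -> a <= 1 ->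
    A (a *: x + (1 - a) *: y).

Definition convex_on (R : realType) (n : nat) (A : set 'rV[R]_n)
    (f : 'rV[R]_n -> R) : Prop :=
  forall x y (a : R), A x -> A y -> 0 <= a -> a <= 1 ->
    f (a *: x + (1 - a) *: y) <= a * f x + (1 - a) * f y.

Definition lambda_convex_on (R : realType) (n : nat) (lambda : R)
    (A : set 'rV[R]_n) (f : 'rV[R]_n -> R) : Prop :=
  convex_on A (fun x => f x - lambda / 2 * norm2 x ^+ 2).

Definition grad (R : realType) (n : nat) (f : 'rV[R]_n -> R) (x : 'rV[R]_n)
  : 'rV[R]_n := \row_(i < n) 'D_(delta_mx ord0 i) f x.

Definition Ex (R : realType) (m : nat) (P : probability 'rV[R]_m R)
    (f : 'rV[R]_m -> R) : R :=
  fine (\int[P]_z (f z)%:E).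

Definition supp (R : realType) (m : nat) (P : probability 'rV[R]_m R)
  : set 'rV[R]_m :=
  [set z | forall U : set 'rV[R]_m, open U -> U z -> (0 < P U)%E].

Definition coupling (R : realType) (m : nat) (P Q : probability 'rV[R]_m R)
    (pi : probability ('rV[R]_m * 'rV[R]_m)%type R) : Prop :=
  (forall A, measurable A -> pi (A `*` setT) = P A) /\
  (forall B, measurable B -> pi (setT `*` B) = Q B).

Definition W1 (R : realType) (m : nat) (P Q : probability 'rV[R]_m R)
  : \bar R :=
  ereal_inf [set (\int[pi]_p (norm2 (p.1 - p.2))%:E)%E
            | pi in [set pi | coupling P Q pi]].

(** Mixture a P + (1 - a) Q of two distributions (weights clamped at 0,
    which is irrelevant for a in [0,1]). *)
Lemma max0_ge0 (R : realType) (a : R) : 0 <= Num.max 0 a.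
Proof. by rewrite le_max lexx. Qed.

Definition nnclamp (R : realType) (a : R) : {nonneg R} :=
  NngNum (max0_ge0 a).

Definition mixture (R : realType) (m : nat) (a : R)
    (P Q : probability 'rV[R]_m R) : {measure set 'rV[R]_m -> \bar R} :=
  measure_add (mscale (nnclamp a) P) (mscale (nnclamp (1 - a)) Q).

Definition cx_le (R : realType) (m : nat) (mu nu : {measure set 'rV[R]_m -> \bar R}) : Prop :=
  forall g : 'rV[R]_m -> R, convex_on setT g ->
    mu.-integrable setT (EFin \o g) -> nu.-integrable setT (EFin \o g) ->
    (\int[mu]_z (g z)%:E <= \int[nu]_z (g z)%:E)%E.

From HB Require Import structures.
From mathcomp Require Import all_boot all_order all_algebra.
From mathcomp Require Import all_classical all_reals all_analysis.
From mathcomp Require Import ring lra.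
From mathcomp Require Import measurable_realfun.

Set Implicit Arguments.
Unset Strict Implicit.
Unset Printing Implicit Defensive.

Import Order.TTheory GRing.Theory Num.Theory.
Import numFieldNormedType.Exports.

Local Open Scope classical_set_scope.
Local Open Scope ring_scope.

(* Put z = a x + (1 - a) y and v = x - y.  Convexity of l(.; z) in the data and mixture
   dominance give PR(z) <= a E_{D(x)} l(.; z) + (1 - a) E_{D(y)} l(.; z).  Strong convexity
   at x and at y, expanded around z, bounds the right-hand side by
   a PR(x) + (1 - a) PR(y) - a(1 - a) gamma/2 |v|^2 + a(1 - a) (E_{D(y)} h - E_{D(x)} h),
   where h(w) = <grad_theta l(w; z), v>.  The last term does not vanish, as the two
   expectations are taken under different distributions; but h is beta|v|-Lipschitz on
   the supports, so the easy half of Kantorovich-Rubinstein duality and eps-sensitivity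
   bound it by eps beta |v|^2.  Finally a|x|^2 + (1 - a)|y|^2 - |z|^2 = a(1 - a)|v|^2. *)

Section inner_product.
Variables (R : realType) (n : nat).
Implicit Types (u v w : 'rV[R]_n) (k : R).

Lemma dotvC u v : dotv u v = dotv v u.
Proof. by apply: eq_bigr => i _; rewrite mulrC. Qed.

Lemma dotvDl u v w : dotv (u + v) w = dotv u w + dotv v w.
Proof. by rewrite /dotv -big_split; apply: eq_bigr => i _; rewrite mxE mulrDl. Qed.

Lemma dotvZl k u w : dotv (k *: u) w = k * dotv u w.
Proof. by rewrite /dotv mulr_sumr; apply: eq_bigr => i _; rewrite mxE mulrA. Qed.

Lemma dotvNl u w : dotv (- u) w = - dotv u w.
Proof. by rewrite -scaleN1r dotvZl mulN1r. Qed.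

Lemma dotvBl u v w : dotv (u - v) w = dotv u w - dotv v w.
Proof. by rewrite dotvDl dotvNl. Qed.

Lemma dotvDr u v w : dotv w (u + v) = dotv w u + dotv w v.
Proof. by rewrite dotvC dotvDl !(dotvC w). Qed.

Lemma dotvZr k u w : dotv w (k *: u) = k * dotv w u.
Proof. by rewrite dotvC dotvZl dotvC. Qed.

Lemma dotvBr u v w : dotv w (u - v) = dotv w u - dotv w v.
Proof. by rewrite dotvC dotvBl !(dotvC w). Qed.

Lemma dotv0l w : dotv 0 w = 0.
Proof. by rewrite -(scale0r 0) dotvZl mul0r. Qed.

Lemma dotvv_ge0 u : 0 <= dotv u u.
Proof. by apply: sumr_ge0 => i _; rewrite -expr2 sqr_ge0. Qed.

Lemma dotvv_eq0 u : (dotv u u == 0) = (u == 0).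
Proof.
apply/idP/eqP => [|->]; last by rewrite dotv0l.
rewrite psumr_eq0 => [/allP u0|i _]; last by rewrite -expr2 sqr_ge0.
apply/rowP => i; rewrite mxE; apply/eqP.
by have := u0 i (mem_index_enum i); rewrite mulf_eq0 orbb.
Qed.

Lemma norm2_ge0 u : 0 <= norm2 u.
Proof. exact: sqrtr_ge0. Qed.

Lemma norm2_sqr u : norm2 u ^+ 2 = dotv u u.
Proof. by rewrite sqr_sqrtr // dotvv_ge0. Qed.

Lemma norm2_eq0 u : (norm2 u == 0) = (u == 0).
Proof. by rewrite -sqrf_eq0 norm2_sqr dotvv_eq0. Qed.

Lemma norm2N u : norm2 (- u) = norm2 u.
Proof. by rewrite /norm2 dotvNl dotvC dotvNl opprK. Qed.

Lemma dotv_le_norm2M u w : dotv u w <= norm2 u * norm2 w.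
Proof.
have [->|u0] := eqVneq u 0; first by rewrite dotv0l mulr_ge0 ?norm2_ge0.
have [->|w0] := eqVneq w 0; first by rewrite dotvC dotv0l mulr_ge0 ?norm2_ge0.
have uw_gt0 : 0 < norm2 u * norm2 w.
  by rewrite mulr_gt0 // lt0r norm2_ge0 norm2_eq0 ?u0 ?w0.
(* 0 <= | |w| u - |u| w |^2 = 2 |u| |w| (|u| |w| - <u, w>) *)
have := dotvv_ge0 (norm2 w *: u - norm2 u *: w).
rewrite dotvBl !dotvBr !dotvZl !dotvZr (dotvC w u) -!norm2_sqr.
nra.
Qed.

Lemma sqr_norm2_convex (a : R) u w :
  norm2 (a *: u + (1 - a) *: w) ^+ 2
  = a * norm2 u ^+ 2 + (1 - a) * norm2 w ^+ 2 - a * (1 - a) * norm2 (u - w) ^+ 2.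
Proof.
rewrite !norm2_sqr !dotvBl !dotvBr !dotvDl !dotvDr !dotvZl !dotvZr (dotvC w u).
ring.
Qed.

End inner_product.

Section support.
Variables (R : realType) (m : nat).
Local Notation T := 'rV[R]_m.

Lemma open_measurable_rV (U : set T) : open U -> measurable U.
Proof. exact: sub_sigma_algebra. Qed.

Definition rat_ball (qr : 'rV[rat]_m * rat) : set T :=
  ball (map_mx (@ratr R) qr.1 : T) (ratr qr.2 : R).

Lemma rat_ball_measurable qr : measurable (rat_ball qr).
Proof. exact: open_measurable_rV (ball_open _ _). Qed.

Lemma rat_ball_sub_ball (z : T) (e : R) : 0 < e ->
  exists qr, rat_ball qr z /\ rat_ball qr `<=` ball z e.
Proof.
move=> e_gt0; have /rat_in_itvoo[r] : 0 < e / 2 by rewrite divr_gt0.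
rewrite in_itv /= => /andP[r_gt0 re].
have /choice[q qz] : forall j : 'I_m, exists qj : rat,
    ratr qj \in `](z ord0 j - ratr r), (z ord0 j + ratr r)[.
  by move=> j; apply: rat_in_itvoo; rewrite ltrD2l gtrN.
have zq : rat_ball (\row_j q j, r) z.
  split=> [//|i j]; rewrite ord1 !mxE /ball /= ltr_distlC.
  by move: (qz j); rewrite in_itv /= => /andP[? ?]; apply/andP; split; lra.
exists (\row_j q j, r); split=> // y /(ball_triangle (ball_sym zq)); apply: le_ball.
by move: re; lra.
Qed.

Lemma supp_compl_negligible (P : probability T R) : P.-negligible (~` supp P).
Proof.
(* ~` supp P is covered by the countably many P-null rational balls. *)
pose null_ball n : set T :=
  if unpickle n is Some qr then
    if P (rat_ball qr) == 0%E then rat_ball qr else set0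
  else set0.
apply: (@negligibleS _ _ _ _ (\bigcup_n null_ball n)).
  move=> z /= /existsNP[U /not_implyP[oU /not_implyP[Uz]]].
  move/negP; rewrite lt0e measure_ge0 andbT negbK => /eqP PU0.
  have /nbhs_ballP[e e_gt0 eU] := open_nbhs_nbhs (conj oU Uz).
  have [qr [qrz qre]] := @rat_ball_sub_ball z e e_gt0.
  exists (pickle qr) => //; rewrite /null_ball pickleK.
  suff -> : P (rat_ball qr) = 0%E by rewrite eqxx.
  apply/eqP; rewrite -measure_le0 -PU0 le_measure ?inE //.
  - exact: rat_ball_measurable.
  - exact: open_measurable_rV.
  - by move=> y /qre /eU.
apply: negligible_bigcup => n; rewrite /null_ball.
case: (unpickle n) => [qr|]; last exact: negligible_set0.
have [PB0|] := eqVneq (P (rat_ball qr)) 0%E; last by move=> _; exact: negligible_set0.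
by exists (rat_ball qr); split=> //; exact: rat_ball_measurable.
Qed.

End support.

Section measurability.
Variables (R : realType) (m : nat).
Local Notation T := 'rV[R]_m.

Lemma coord_measurable (i : 'I_m) : measurable_fun setT (fun x : T => x ord0 i).
Proof.
apply: (@measurability _ _ T R setT _ _ (RGenOpens.measurableE R)).
move=> _ [_ [a [b ->] <-]]; rewrite setTI.
apply: open_measurable_rV; move: (@coord_continuous R 1 m ord0 i) => /continuousP.
by apply; exact: interval_open.
Qed.

Lemma norm2_sub_measurable :
  measurable_fun setT (fun p : T * T => norm2 (p.1 - p.2)).
Proof.
rewrite /norm2 /dotv.
apply: measurableT_comp; first exact: continuous_measurable_fun (@sqrt_continuous R).
apply: measurable_sum => j.
under eq_fun do rewrite !mxE.
have mj (f : T * T -> T) : measurable_fun setT f -> measurable_fun setT (fun p => f p ord0 j).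
  by move=> mf; exact: measurableT_comp (coord_measurable j) mf.
by apply: measurable_funM; apply: measurable_funB; apply: mj.
Qed.

End measurability.

Section image_measure.
Local Open Scope ereal_scope.
Context d1 d2 (X : measurableType d1) (Y : measurableType d2) (R : realType).
Variables (mu : {measure set X -> \bar R}) (nu : {measure set Y -> \bar R}).
Variables (phi : X -> Y) (f : Y -> \bar R).
Hypothesis mphi : measurable_fun setT phi.
Hypothesis nu_image : forall A, measurable A -> mu (phi @^-1` A) = nu A.
Hypothesis nu_int_f : nu.-integrable setT f.

Let nu_pushforward (h : Y -> \bar R) :
  \int[nu]_y h y = \int[pushforward mu phi]_y h y.
Proof. by apply: eq_measure_integral => A mA _; rewrite -nu_image. Qed.

Lemma integrable_image_measure : mu.-integrable setT (f \o phi).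
Proof.
have mf := measurable_int nu nu_int_f.
apply/integrableP; split; first exact: measurableT_comp.
case/integrableP: nu_int_f => _; rewrite nu_pushforward ge0_integral_pushforward //.
exact: measurableT_comp.
Qed.

Lemma integral_image_measure : \int[mu]_x f (phi x) = \int[nu]_y f y.
Proof.
rewrite nu_pushforward integral_pushforward //; first exact: measurable_int nu_int_f.
exact: integrable_image_measure.
Qed.

End image_measure.

Section integral_mscale.
Local Open Scope ereal_scope.
Context d (T : measurableType d) (R : realType).
Variables (k : {nonneg R}) (mu : {measure set T -> \bar R}).
Variables (D : set T) (f : T -> \bar R).
Hypotheses (mD : measurable D) (mu_int_f : mu.-integrable D f).

Lemma integrable_mscale : (mscale k mu).-integrable D f.
Proof.
have mf := measurable_int mu mu_int_f.
apply/integrableP; split => //; rewrite ge0_integral_mscale //; last first.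
  exact: measurableT_comp.
case/integrableP: mu_int_f => _ fint.
by apply: lte_mul_pinfty => //; rewrite lee_fin.
Qed.

Lemma integral_mscale : \int[mscale k mu]_(x in D) f x = k%:num%:E * \int[mu]_(x in D) f x.
Proof.
have mf := measurable_int mu mu_int_f.
rewrite (integralE (mscale k mu) D f) (integralE mu D f).
rewrite !ge0_integral_mscale //; [|exact: measurable_funeneg|exact: measurable_funepos].
rewrite [RHS]muleBr //; apply: fin_num_adde_defl; rewrite fin_numN.
exact/integrable_fin_num/integrable_funeneg.
Qed.

End integral_mscale.

Section expectation.
Variables (R : realType) (m : nat).
Local Notation T := 'rV[R]_m.
Implicit Types (P : probability T R) (f : T -> R).

Lemma EFin_Ex P f : P.-integrable setT (fun z => (f z)%:E) ->
  (Ex P f)%:E = (\int[P]_z (f z)%:E)%E.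
Proof. by move=> Pf; rewrite fineK // (integrable_fin_num measurableT Pf). Qed.

Lemma integrable_mulr P f k : P.-integrable setT (fun z => (f z)%:E) ->
  P.-integrable setT (fun z => (k * f z)%:E).
Proof. by move=> Pf; under eq_fun do rewrite EFinM; exact: integrableZl. Qed.

Lemma ExZ P f k : P.-integrable setT (fun z => (f z)%:E) ->
  Ex P (fun z => k * f z) = k * Ex P f.
Proof.
by move=> Pf; apply/EFin_inj; rewrite EFinM !EFin_Ex ?integrable_mulr // -integralZl.
Qed.

Lemma integrable_dotv (n : nat) P (h : T -> 'rV[R]_n) (u : 'rV[R]_n) :
  (forall i, P.-integrable setT (fun z => (h z ord0 i)%:E)) ->
  P.-integrable setT (fun z => (dotv (h z) u)%:E).
Proof.
move=> Ph; under eq_fun do rewrite /dotv -sumEFin.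
apply: integrable_sum => // i _; under eq_fun do rewrite mulrC.
exact: integrable_mulr.
Qed.

End expectation.

Section mixture.
Local Open Scope ereal_scope.
Variables (R : realType) (m : nat).
Local Notation T := 'rV[R]_m.

Lemma nnclampE (b : R) : (0 <= b)%R -> (nnclamp b)%:num = b.
Proof. by move=> b_ge0; rewrite /= max_r. Qed.

Variables (a : R) (P Q : probability T R) (f : T -> \bar R).
Hypotheses (a_ge0 : (0 <= a)%R) (a_le1 : (a <= 1)%R).
Hypotheses (Pf : P.-integrable setT f) (Qf : Q.-integrable setT f).

Lemma integrable_mixture : (mixture a P Q).-integrable setT f.
Proof.
have mf := measurable_int P Pf.
apply/integrableP; split => //; rewrite ge0_integral_measure_add //; last first.
  exact: measurableT_comp.
case/integrableP: (integrable_mscale (nnclamp a) measurableT Pf) => _ ?.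
case/integrableP: (integrable_mscale (nnclamp (1 - a)) measurableT Qf) => _ ?.
exact: lte_add_pinfty.
Qed.

Lemma integral_mixture : \int[mixture a P Q]_z f z =
  a%:E * \int[P]_z f z + (1 - a)%:E * \int[Q]_z f z.
Proof.
rewrite integral_measure_add ?integrable_mscale //.
by rewrite !integral_mscale // !nnclampE // subr_ge0.
Qed.

End mixture.

Section coupling.
Variables (R : realType) (m : nat).
Local Notation T := 'rV[R]_m.
Variables (P Q : probability T R).

Section fixed_coupling.
Variable pi : probability (T * T)%type R.
Hypothesis PQpi : coupling P Q pi.

Lemma coupling_fst A : measurable A -> pi (fst @^-1` A) = P A.
Proof. by move=> mA; rewrite -setXT; exact: PQpi.1. Qed.

Lemma coupling_snd B : measurable B -> pi (snd @^-1` B) = Q B.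
Proof. by move=> mB; rewrite -setTX; exact: PQpi.2. Qed.

Lemma coupling_ae_supp : {ae pi, forall p, supp P p.1 /\ supp Q p.2}.
Proof.
apply: (@negligibleS _ _ _ _ ((~` supp P) `*` setT `|` setT `*` (~` supp Q))).
  by move=> [x y] /= /not_andP[]; [left|right].
have [N [mN PN0 notPN]] := supp_compl_negligible P.
have [N' [mN' QN0 notQN']] := supp_compl_negligible Q.
apply: negligibleU.
- exists (N `*` setT); split; [exact: measurableX| |by move=> p [/notPN]].
  by rewrite -PN0; exact: PQpi.1.
- exists (setT `*` N'); split; [exact: measurableX| |by move=> p [_ /notQN']].
  by rewrite -QN0; exact: PQpi.2.
Qed.

Variables (g : T -> R) (c : R).
Hypothesis c_ge0 : 0 <= c.
Hypotheses (Pg : P.-integrable setT (fun z => (g z)%:E))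
  (Qg : Q.-integrable setT (fun z => (g z)%:E)).
Hypothesis g_lip :
  forall z z', supp P z -> supp Q z' -> g z - g z' <= c * norm2 (z - z').

Lemma coupling_Ex_subr_le : ((Ex P g - Ex Q g)%:E <=
  c%:E * \int[pi]_p (norm2 (p.1 - p.2))%:E)%E.
Proof.
have pi_g1 := integrable_image_measure measurable_fst coupling_fst Pg.
have pi_g2 := integrable_image_measure measurable_snd coupling_snd Qg.
rewrite EFinB !EFin_Ex // -(integral_image_measure measurable_fst coupling_fst Pg).
rewrite -(integral_image_measure measurable_snd coupling_snd Qg) -integralB_EFin //.
have mN := @norm2_sub_measurable R m.
(* The transport cost may be infinite: bound only the positive part of the integrand. *)
rewrite integralE -ge0_integralZl_EFin //; last 2 first.
- by move=> p _; rewrite lee_fin norm2_ge0.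
- exact/measurable_EFinP.
rewrite -[leRHS]sube0 leeB ?integral_ge0 //.
apply: ae_ge0_le_integral => //.
- apply: measurable_funepos; apply: emeasurable_funB.
  + exact: measurable_int pi_g1.
  + exact: measurable_int pi_g2.
- by move=> p _; rewrite lee_fin mulr_ge0 ?norm2_ge0.
- exact/measurable_EFinP/measurable_funM.
apply: filterS coupling_ae_supp => p [Pp Qp] _.
rewrite funeposE -EFinB -EFin_max lee_fin ge_max g_lip //=.
by rewrite mulr_ge0 ?norm2_ge0.
Qed.

End fixed_coupling.

Lemma Ex_subr_le_W1 (g : T -> R) (c w : R) : 0 <= c ->
  P.-integrable setT (fun z => (g z)%:E) -> Q.-integrable setT (fun z => (g z)%:E) ->
  (forall z z', supp P z -> supp Q z' -> g z - g z' <= c * norm2 (z - z')) ->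
  (W1 P Q <= w%:E)%E -> Ex P g - Ex Q g <= c * w.
Proof.
move=> c_ge0 Pg Qg g_lip PQw; apply/ler_addgt0Pr => e e_gt0.
have c1_gt0 : 0 < c + 1 by rewrite ltr_wpDl.
have /ereal_inf_lt[_ [pi PQpi <-] cost_lt] : (W1 P Q < (w + e / (c + 1))%:E)%E.
  by rewrite (le_lt_trans PQw) // lte_fin ltrDl divr_gt0.
have := coupling_Ex_subr_le PQpi c_ge0 Pg Qg g_lip.
move=> /le_trans/(_ (lee_wpmul2l _ (ltW cost_lt))); rewrite lee_fin -EFinM lee_fin.
have : c * (e / (c + 1)) <= e by rewrite mulrA ler_pdivrMr //; nra.
nra.
Qed.

End coupling.

Section performative_risk.
Variables (R : realType) (d m : nat) (Theta : set 'rV[R]_d).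
Variables (D : 'rV[R]_d -> probability 'rV[R]_m R) (l : 'rV[R]_m -> 'rV[R]_d -> R).
Variables (gamma beta eps : R).
Hypothesis Theta_convex : convex_setv Theta.
Hypothesis beta_ge0 : 0 <= beta.
Hypothesis l_int : forall theta theta0, Theta theta -> Theta theta0 ->
  (D theta0).-integrable setT (fun z => (l z theta)%:E).
Hypothesis grad_int : forall theta theta0 (i : 'I_d), Theta theta -> Theta theta0 ->
  (D theta0).-integrable setT (fun z => (grad (l z) theta ord0 i)%:E).
Hypothesis strongly_convex :
  forall theta theta' theta0, Theta theta -> Theta theta' -> Theta theta0 ->
  Ex (D theta0) (fun z => l z theta) >=
    Ex (D theta0) (fun z => l z theta')
    + Ex (D theta0) (fun z => dotv (grad (l z) theta') (theta - theta'))
    + gamma / 2 * norm2 (theta - theta') ^+ 2.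
Hypothesis smooth_in_z : forall theta z z', Theta theta ->
  (exists t, Theta t /\ supp (D t) z) -> (exists t, Theta t /\ supp (D t) z') ->
  norm2 (grad (l z) theta - grad (l z') theta) <= beta * norm2 (z - z').
Hypothesis sensitive : forall theta theta', Theta theta -> Theta theta' ->
  (W1 (D theta) (D theta') <= (eps * norm2 (theta - theta'))%:E)%E.
Hypothesis convex_in_z : forall theta, Theta theta -> convex_on setT (fun z => l z theta).
Hypothesis mixture_dominance :
  forall theta theta' (a : R), Theta theta -> Theta theta' -> 0 < a -> a < 1 ->
  cx_le (D (a *: theta + (1 - a) *: theta')) (mixture a (D theta) (D theta')).

Let PR theta := Ex (D theta) (fun z => l z theta).

Lemma PR_le_mixture x y z a : Theta x -> Theta y -> 0 < a -> a < 1 ->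
  z = a *: x + (1 - a) *: y ->
  PR z <= a * Ex (D x) (fun w => l w z) + (1 - a) * Ex (D y) (fun w => l w z).
Proof.
move=> Tx Ty a_gt0 a_lt1 ->; set z0 := _ + _.
have Tz0 : Theta z0 by apply: Theta_convex; rewrite ?ltW.
have mix_int := integrable_mixture a (l_int Tz0 Tx) (l_int Tz0 Ty).
have := mixture_dominance Tx Ty a_gt0 a_lt1 (convex_in_z Tz0) (l_int Tz0 Tz0) mix_int.
rewrite integral_mixture ?(ltW a_gt0) ?(ltW a_lt1) ?l_int //.
by rewrite -!EFin_Ex ?l_int // -!EFinM -EFinD lee_fin.
Qed.

Lemma Ex_strongly_convex_along theta z theta0 k v :
  Theta theta -> Theta z -> Theta theta0 -> theta - z = k *: v ->
  Ex (D theta0) (fun w => l w z) + k * Ex (D theta0) (fun w => dotv (grad (l w) z) v)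
    + gamma / 2 * (k ^+ 2 * norm2 v ^+ 2) <= Ex (D theta0) (fun w => l w theta).
Proof.
move=> Tt Tz Tt0 tz_kv; have := strongly_convex Tt Tz Tt0; rewrite tz_kv.
have -> : (fun w => dotv (grad (l w) z) (k *: v)) = (fun w => k * dotv (grad (l w) z) v).
  by apply/funext => w; rewrite dotvZr.
rewrite ExZ; last by apply: integrable_dotv => i; exact: grad_int.
by rewrite !norm2_sqr dotvZl dotvZr [k * (k * _)]mulrA -expr2.
Qed.

Lemma Ex_grad_gap theta x y : Theta theta -> Theta x -> Theta y ->
  Ex (D y) (fun w => dotv (grad (l w) theta) (x - y))
    - Ex (D x) (fun w => dotv (grad (l w) theta) (x - y))
  <= eps * beta * norm2 (x - y) ^+ 2.
Proof.
move=> Tt Tx Ty.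
have -> : eps * beta * norm2 (x - y) ^+ 2 = beta * norm2 (x - y) * (eps * norm2 (y - x)).
  by rewrite -opprB norm2N; ring.
apply: Ex_subr_le_W1 (sensitive Ty Tx).
- by rewrite mulr_ge0 ?norm2_ge0.
- by apply: integrable_dotv => i; exact: grad_int.
- by apply: integrable_dotv => i; exact: grad_int.
move=> w w' w_supp w'_supp; rewrite -dotvBl.
apply: le_trans (dotv_le_norm2M _ _) _; rewrite mulrAC ler_wpM2r ?norm2_ge0 //.
by apply: smooth_in_z => //; [exists y | exists x].
Qed.

Lemma PR_lambda_convex : lambda_convex_on (gamma - 2 * eps * beta) Theta PR.
Proof.
move=> x y a Tx Ty a_ge0 a_le1.
have [->|a_neq0] := eqVneq a 0.
  by rewrite scale0r add0r subr0 scale1r mul0r add0r mul1r.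
have [->|a_neq1] := eqVneq a 1.
  by rewrite scale1r subrr scale0r addr0 mul1r mul0r addr0.
have a_gt0 : 0 < a by rewrite lt_neqAle eq_sym a_neq0.
have a_lt1 : a < 1 by rewrite lt_neqAle a_neq1.
set z := a *: x + (1 - a) *: y.
have Tz : Theta z by exact: Theta_convex.
have PR_z_le := PR_le_mixture Tx Ty a_gt0 a_lt1 (erefl z).
have x_z : x - z = (1 - a) *: (x - y) by apply/rowP => i; rewrite !mxE; ring.
have y_z : y - z = (- a) *: (x - y) by apply/rowP => i; rewrite !mxE; ring.
have b_ge0 : 0 <= 1 - a by rewrite subr_ge0.
have := ler_wpM2l a_ge0 (Ex_strongly_convex_along Tx Tz Tx x_z).
have := ler_wpM2l b_ge0 (Ex_strongly_convex_along Ty Tz Ty y_z).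
have := ler_wpM2l (mulr_ge0 a_ge0 b_ge0) (Ex_grad_gap Tz Tx Ty).
move: PR_z_le; rewrite /PR /z sqr_norm2_convex; lra.
Qed.

End performative_risk.

Unset Implicit Arguments.

Theorem corollaryA1 (R : realType) (d m : nat)
    (Theta : set 'rV[R]_d)
    (D : 'rV[R]_d -> probability 'rV[R]_m R)
    (l : 'rV[R]_m -> 'rV[R]_d -> R)
    (gamma beta eps : R) :
  (* Theta closed and convex *)
  closed Theta -> convex_setv Theta ->
  (* constants *)
  0 < gamma -> 0 <= beta -> 0 <= eps ->
  (* standing regularity: l(z; .) differentiable on Theta; the expectations
     appearing below exist *)
  (forall z theta, Theta theta -> differentiable (l z) theta) ->
  (forall theta theta0, Theta theta -> Theta theta0 ->
     (D theta0).-integrable setT (fun z => (l z theta)%:E)) ->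
  (forall theta theta0 (i : 'I_d), Theta theta -> Theta theta0 ->
     (D theta0).-integrable setT (fun z => (grad (l z) theta ord0 i)%:E)) ->
  (* gamma-strongly convex in theta *)
  (forall theta theta' theta0, Theta theta -> Theta theta' -> Theta theta0 ->
     Ex (D theta0) (fun z => l z theta) >=
       Ex (D theta0) (fun z => l z theta')
       + Ex (D theta0) (fun z => dotv (grad (l z) theta') (theta - theta'))
       + gamma / 2 * norm2 (theta - theta') ^+ 2) ->
  (* beta-smooth in z *)
  (forall theta z z', Theta theta ->
     (exists t, Theta t /\ supp (D t) z) ->
     (exists t, Theta t /\ supp (D t) z') ->
     norm2 (grad (l z) theta - grad (l z') theta) <= beta * norm2 (z - z')) ->
  (* eps-sensitive *)
  (forall theta theta', Theta theta -> Theta theta' ->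
     (W1 (D theta) (D theta') <= (eps * norm2 (theta - theta'))%:E)%E) ->
  (* l(z; theta) convex in z *)
  (forall theta, Theta theta -> convex_on setT (fun z => l z theta)) ->
  (* mixture dominance *)
  (forall theta theta' (a : R), Theta theta -> Theta theta' -> 0 < a -> a < 1 ->
     cx_le (D (a *: theta + (1 - a) *: theta'))
           (mixture a (D theta) (D theta'))) ->
  lambda_convex_on (gamma - 2 * eps * beta) Theta
    (fun theta => Ex (D theta) (fun z => l z theta)).
Proof.
move=> _ Theta_convex _ beta_ge0 _ _ l_int grad_int strongly_convex smooth_in_z
  sensitive convex_in_z mixture_dominance.
exact: (PR_lambda_convex Theta_convex beta_ge0 l_int grad_int strongly_convex
  smooth_in_z sensitive convex_in_z mixture_dominance).
Qed.
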